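(* Let $\mathcal P$ be a pre-Hahn-localizable family of probability measures on $(\Omega,\mathcal F)$ with a localization $\mathcal Q$ whose supports are pairwise disjoint, and let $\mathcal H_{\mathcal F}^{\mathcal Q}$ be its Hahn-extension. For $\mu\in\mathrm{ca}(\mathcal P)$ and $P\in\mathcal P$ we have $\mu\ll P$ if and only if $\mu^{\mathcal Q}\ll P^{\mathcal Q}$.
   Context: $\mathrm{ca}(\mathcal P)$ is the set of finite signed measures $\mu$ on $\mathcal F$ with $|\mu|\ll P$ for some $P\in\mathcal P$; for signed $\mu$, $\mu\ll P$ means $|\mu|\ll P$. $\mathcal A\lll\mathcal B$ means every $A\in\mathcal A$ is absolutely continuous w.r.t. some $B\in\mathcal B$; $\mathrm{sconv}$ denotes countable convex combinations. $\mathcal P$ is pre-Hahn-localizable with localization $\mathcal Q$ and supports $S_Q\in\mathcal F$ if $Q(S_R)=\delta_{QR}$ for $Q,R\in\mathcal Q$ and $\mathcal Q\lll\mathcal P\lll\mathrm{sconv}(\mathcal Q)$. Hahn-extension: $\mathcal H_{\mathcal F}^{\mathcal Q}=\sigma\big(\mathcal F\cup\{\bigcup_{Q}E_Q:E_Q\in\mathcal F,E_Q\subseteq S_Q\}\big)$. For $\mu\in\mathrm{ca}(\mathcal P)$, $\mathcal Q(\mu)=\{Q:|\mu|(S_Q)>0\}$ (countable) and $\mu^{\mathcal Q}(A)=\sum_{Q\in\mathcal Q(\mu)}\mu(A\cap S_Q)$ for $A\in\mathcal H_{\mathcal F}^{\mathcal Q}$, a finite signed measure extending $\mu$. *)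

From HB Require Import structures.
From mathcomp Require Import all_boot all_order all_algebra.
From mathcomp Require Import all_classical all_reals all_analysis charge.
Set Implicit Arguments. Unset Strict Implicit. Unset Printing Implicit Defensive.
Import Order.TTheory GRing.Theory Num.Theory.
Local Open Scope classical_set_scope.
Local Open Scope ring_scope.
Local Open Scope ereal_scope.

Section Defs.
Context {d : measure_display} {T : measurableType d} {R : realType}.

Definition variation (nu : set T -> \bar R) (A : set T) : \bar R :=
  ereal_sup [set x | exists (n : nat) (B : nat -> set T),
    [/\ (forall i, (i < n)%N -> measurable (B i)),
        trivIset `I_n B,
        \big[setU/set0]_(i < n) B i = A &
        x = \sum_(i < n) `|nu (B i)| ]].

Definition abs_cont (nu m : set T -> \bar R) : Prop :=
  forall A, measurable A -> m A = 0 -> variation nu A = 0.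

Definition mfam (PP : set (probability T R)) : set (set T -> \bar R) :=
  [set (P : set T -> \bar R) | P in PP].

Definition lll (AA BB : set (set T -> \bar R)) : Prop :=
  forall a, AA a -> exists2 b, BB b & abs_cont a b.

Definition sconv (QQ : set (probability T R)) : set (set T -> \bar R) :=
  [set m | exists (lam : nat -> R) (q : nat -> probability T R),
    [/\ (forall n, QQ (q n)), (forall n, (0 <= lam n)%R),
        \sum_(n <oo) (lam n)%:E = 1 &
        m = fun A => \sum_(n <oo) ((lam n)%:E * q n A)]].

Definition pre_hahn_localizable (PP QQ : set (probability T R))
    (S : probability T R -> set T) : Prop :=
  [/\ (forall Q, QQ Q -> measurable (S Q)),
      (forall Q Q', QQ Q -> QQ Q' -> Q = Q' -> Q (S Q') = 1),
      (forall Q Q', QQ Q -> QQ Q' -> Q <> Q' -> Q (S Q') = 0),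
      lll (mfam QQ) (mfam PP) &
      lll (mfam PP) (sconv QQ)].

Definition in_ca (PP : set (probability T R)) (nu : set T -> \bar R) : Prop :=
  exists2 P, PP P & abs_cont nu (P : set T -> \bar R).

Definition Hgen (QQ : set (probability T R)) (S : probability T R -> set T)
  : set (set T) :=
  [set A | measurable A \/
    exists E : probability T R -> set T,
      (forall Q, QQ Q -> measurable (E Q) /\ E Q `<=` S Q) /\
      A = \bigcup_(Q in QQ) E Q].

(* Omega equipped with the Hahn-extension sigma-algebra *)
Definition HT (QQ : set (probability T R)) (S : probability T R -> set T) :=
  g_sigma_algebraType (Hgen QQ S).

Definition ssum (I : choiceType) (D : set I) (f : I -> \bar R) : \bar R :=
  esum D f^\+ - esum D f^\-.

Definition Qof (QQ : set (probability T R)) (S : probability T R -> set T)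
  (nu : set T -> \bar R) : set {classic (probability T R)} :=
  [set Q | QQ Q /\ 0 < variation nu (S Q)].

Definition hext (QQ : set (probability T R)) (S : probability T R -> set T)
  (nu : set T -> \bar R) : set (HT QQ S) -> \bar R :=
  fun A => ssum (Qof QQ S nu) (fun Q : {classic (probability T R)} => nu (A `&` S Q)).

End Defs.

Arguments hext {d T R} QQ S nu _.
Arguments HT {d T R} QQ S.
Arguments Qof {d T R} QQ S nu _.
Arguments Hgen {d T R} QQ S _.

From Pilot Require Import Defs.
From HB Require Import structures.
From mathcomp Require Import all_boot all_order all_algebra.
From mathcomp Require Import all_classical all_reals all_analysis charge.
Import Order.TTheory GRing.Theory Num.Theory.
Local Open Scope classical_set_scope.
Local Open Scope ereal_scope.

(* Since the supports are disjoint, a set A of the Hahn-extension meets each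
   support S_Q in an F-measurable set, and a set D inside a single support
   satisfies nu^Q(D) = nu(D) (if |nu|(S_Q) = 0 both sides vanish).  Hence if
   P^Q(A) = 0 then P(A ∩ S_Q) = 0 for every Q, so mu(A ∩ S_Q) = 0 when
   mu ≪ P, and mu^Q(A) = 0.  Conversely, if mu^Q ≪ P^Q then mu vanishes on
   the P-null sets lying inside one support; and since mu ≪ P' ≪ Σ_n lam_n q_n
   with q_n in Q, mu is carried by the countable union of the S_(q_n), so it
   vanishes on every P-null set by countable additivity. *)

Section variation.
Context {d : measure_display} {T : measurableType d} {R : realType}.
Implicit Types (nu m : set T -> \bar R) (A B : set T).

Lemma abse_le_variation nu A B : measurable A -> measurable B -> B `<=` A ->
  `|nu B| <= Defs.variation nu A.
Proof.
move=> mA mB BA.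
pose F i := if i == 0%N then B else A `\` B.
have sumF : \sum_(i < 2) `|nu (F i)| <= Defs.variation nu A.
  apply: ereal_sup_ubound; exists 2%N, F; split => //.
  - by move=> [|[|i]] _ //=; exact: measurableD.
  - move=> [|[|i]] [|[|j]] //= _ _ [x []]; rewrite /F /=.
    + by move=> ? [].
    + by move=> [].
  - by rewrite big_ord_recr big_ord_recr big_ord0 /= set0U setDUK.
apply: le_trans sumF.
by rewrite big_ord_recr big_ord_recr big_ord0 /= add0e leeDl.
Qed.

Lemma variation_eq0 nu A : measurable A ->
  (forall B, measurable B -> B `<=` A -> nu B = 0) -> Defs.variation nu A = 0.
Proof.
move=> mA nu0; apply/eqP; rewrite eq_le; apply/andP; split.
  apply: ge_ereal_sup => _ [n [B [mB _ UB ->]]].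
  rewrite big1 // => i _; rewrite nu0 ?abse0 //; first exact: mB.
  by rewrite -UB; exact: bigsetU_sup.
have := abse_le_variation nu A A mA mA (@subset_refl _ A).
exact/le_trans/abse_ge0.
Qed.

Lemma abs_cont_eq0 {nu m A} :
  abs_cont nu m -> measurable A -> m A = 0 -> nu A = 0.
Proof.
move=> num mA mA0; apply/eqP; rewrite -abse_eq0 eq_le abse_ge0 andbT.
by rewrite -(num A mA mA0); exact: abse_le_variation.
Qed.

Lemma abs_contP nu m :
  (forall A, measurable A -> 0 <= m A) ->
  (forall A B, measurable A -> measurable B -> A `<=` B -> m A <= m B) ->
  abs_cont nu m <-> forall A, measurable A -> m A = 0 -> nu A = 0.
Proof.
move=> m_ge0 le_m; split => [num A|num A mA mA0]; first exact: abs_cont_eq0.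
apply: variation_eq0 => // B mB BA; apply: num => //.
by apply/eqP; rewrite eq_le m_ge0 // andbT -mA0 le_m.
Qed.

Lemma measure_abs_contP nu (P : {measure set T -> \bar R}%R) :
  abs_cont nu P <-> forall A, measurable A -> P A = 0 -> nu A = 0.
Proof.
by apply: abs_contP => // A B mA mB; apply: le_measure; rewrite inE.
Qed.

End variation.

Section ssum.
Context {R : realType} {I : choiceType}.
Implicit Types (D : set I) (f : I -> \bar R).

Lemma esum_single D f i : D i -> (forall j, D j -> 0 <= f j) ->
  (forall j, D j -> j <> i -> f j = 0) -> esum D f = f i.
Proof.
move=> Di f_ge0 f0; rewrite (esumID [set i]) // [X in _ + X]esum1 ?adde0.
  by rewrite setIidr ?sub1set ?inE // esum_set1 // f_ge0.
by move=> j [Dj /= ji]; exact: f0.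
Qed.

Lemma ssum_single D f i : D i -> (forall j, D j -> j <> i -> f j = 0) ->
  ssum D f = f i.
Proof.
move=> Di f0; rewrite /ssum [in RHS](funeposneg f).
rewrite (@esum_single _ _ i) // => [|j Dj ji]; last first.
  by rewrite funeposE f0 // maxxx.
rewrite (@esum_single _ _ i) // => j Dj ji.
by rewrite funenegE f0 // oppe0 maxxx.
Qed.

Lemma ssum0 D f : (forall i, D i -> f i = 0) -> ssum D f = 0.
Proof.
move=> f0; rewrite /ssum !esum1 ?sube0 // => i Di.
- by rewrite funenegE f0 // oppe0 maxxx.
- by rewrite funeposE f0 // maxxx.
Qed.

Lemma ge0_ssumE D f : (forall i, D i -> 0 <= f i) -> ssum D f = esum D f.
Proof.
move=> f_ge0; rewrite /ssum [X in _ - X]esum1 ?sube0; last first.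
  by move=> i Di; rewrite (ge0_funenegE f_ge0) // inE.
by apply: eq_esum => i Di; rewrite (ge0_funeposE f_ge0) // inE.
Qed.

End ssum.

Section hahn_extension.
Context {d : measure_display} {T : measurableType d} {R : realType}.
Variables (QQ : set (probability T R)) (S : probability T R -> set T).
Hypothesis mS : forall Q, QQ Q -> measurable (S Q).
Hypothesis S_disj : forall Q Q', QQ Q -> QQ Q' -> Q <> Q' -> S Q `&` S Q' = set0.

Lemma measurable_HT (A : set T) : measurable A -> measurable (A : set (HT QQ S)).
Proof. by move=> mA; apply: sub_sigma_algebra; left. Qed.

Lemma setI_support_eq0 {Q Q'} {D : set T} : QQ Q -> QQ Q' -> Q <> Q' ->
  D `<=` S Q -> D `&` S Q' = set0.
Proof. by move=> ? ? ? /setIidl <-; rewrite -setIA S_disj // setI0. Qed.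

Lemma measurable_HT_setI_support (A : set (HT QQ S)) Q :
  measurable A -> QQ Q -> measurable (A `&` S Q : set T).
Proof.
move=> mA QQQ; move: A mA Q QQQ.
suff : <<s Hgen QQ S>> `<=` [set A | forall Q, QQ Q -> measurable (A `&` S Q)].
  by move=> + A; apply.
apply: smallest_sub.
  split => [Q _|A mAS Q QQQ|F mFS Q QQQ]; first by rewrite set0I.
    have -> : (setT `\` A) `&` S Q = S Q `\` (A `&` S Q).
      by rewrite setDIr setDv setU0 setTD setIC setDE.
    by apply: measurableD; [exact: mS | exact: mAS].
  by rewrite setI_bigcupl; apply: bigcupT_measurable => n; exact: mFS.
move=> A [mA Q QQQ|[E [mE ->]] Q QQQ].
  by apply: measurableI => //; exact: mS.
have -> : (\bigcup_(Q' in QQ) E Q') `&` S Q = E Q.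
  rewrite setI_bigcupl; apply/seteqP; split => [x [Q' QQQ' []]|x EQx].
    case: (pselect (Q' = Q)) => [-> //|Q'Q EQ'x SQx].
    have : (E Q' `&` S Q) x by [].
    by rewrite (setI_support_eq0 QQQ' QQQ Q'Q (proj2 (mE Q' QQQ'))).
  by exists Q => //; split => //; exact: (proj2 (mE Q QQQ)).
exact: (proj1 (mE Q QQQ)).
Qed.

Lemma hext_sub_support (nu : set T -> \bar R) Q (D : set T) : nu set0 = 0 ->
  QQ Q -> measurable D -> D `<=` S Q -> hext QQ S nu D = nu D.
Proof.
move=> nu0 QQQ mD DS.
have nuS Q' : QQ Q' -> Q' <> Q -> nu (D `&` S Q') = 0.
  by move=> QQQ' Q'Q; rewrite (setI_support_eq0 QQQ QQQ' _ DS) // => /esym.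
have [numQ|numQ] := pselect (Qof QQ S nu Q).
  rewrite /hext (ssum_single _ _ _ numQ) ?setIidl // => Q' [QQQ' _]; exact: nuS.
rewrite /hext ssum0 => [|Q' [QQQ' nuQ']]; last first.
  by apply: nuS => // Q'Q; apply: numQ; rewrite -Q'Q.
apply/esym/eqP; rewrite -abse_eq0 eq_le abse_ge0 andbT.
apply: le_trans (abse_le_variation nu (S Q) D (mS _ QQQ) mD DS) _.
by rewrite leNgt; apply/negP => nuS_gt0; apply: numQ.
Qed.

Section hext_measure.
Variable P : {measure set T -> \bar R}%R.

Lemma hext_ge0 (A : set (HT QQ S)) : 0 <= hext QQ S P A.
Proof. by rewrite /hext ge0_ssumE // esum_ge0. Qed.

Lemma le_hext (A B : set (HT QQ S)) : measurable A -> measurable B -> A `<=` B ->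
  hext QQ S P A <= hext QQ S P B.
Proof.
move=> mA mB AB; rewrite /hext !ge0_ssumE //; apply: le_esum => Q [QQQ _].
by apply: le_measure; rewrite ?inE;
  [exact: measurable_HT_setI_support .. | exact: setSI].
Qed.

Lemma hext_eq0_setI (A : set (HT QQ S)) Q : measurable A -> QQ Q ->
  hext QQ S P A = 0 -> P (A `&` S Q) = 0.
Proof.
move=> mA QQQ PA0; have mAQ := measurable_HT_setI_support _ _ mA QQQ.
rewrite -(hext_sub_support _ _ _ (measure0 P) QQQ mAQ (@subIsetr _ _ _)).
apply/eqP; rewrite eq_le hext_ge0 andbT -PA0.
by apply: le_hext => //; exact: measurable_HT.
Qed.

End hext_measure.

End hahn_extension.

Lemma charge_eq0_cover {d : measure_display} {T : measurableType d} {R : realType}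
    (mu : {charge set T -> \bar R}%R) (A : set T) (F : nat -> set T) :
  measurable A -> (forall n, measurable (F n)) ->
  mu (A `\` \bigcup_n F n) = 0 ->
  (forall n D, measurable D -> D `<=` A `&` F n -> mu D = 0) -> mu A = 0.
Proof.
move=> mA mF muAU muAF.
have mU : measurable (\bigcup_n F n) by exact: bigcupT_measurable.
rewrite -[A](setUIDK _ (\bigcup_n F n)) chargeU; first last.
- by rewrite setDE setIACA setICr setI0.
- exact: measurableD.
- exact: measurableI.
rewrite muAU adde0 setI_bigcupr seqDU_bigcup_eq.
have mG : forall n, measurable (seqDU (fun n => A `&` F n) n).
  by apply: seqDU_measurable => n; exact: measurableI.
have sum0 n : (\sum_(0 <= i < n) mu (seqDU (fun n => A `&` F n) i))%R = 0.
  by rewrite big1 // => i _; apply: muAF (mG i) _; exact: subset_seqDU.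
have := @charge_semi_sigma_additive _ _ _ mu _ mG (@trivIset_seqDU _ _)
  (bigcupT_measurable _ mG).
under eq_fun do rewrite sum0.
by move=> cvg_mu; apply: cvg_unique cvg_mu (cvg_cst _).
Qed.

Lemma sconv_null_outside_supports {d : measure_display} {T : measurableType d}
    {R : realType} {QQ : set (probability T R)} {S : probability T R -> set T}
    {m : set T -> \bar R} :
  (forall Q, QQ Q -> measurable (S Q)) -> (forall Q, QQ Q -> Q (S Q) = 1) ->
  sconv QQ m ->
  exists2 q : nat -> probability T R, (forall n, QQ (q n)) &
    m (~` \bigcup_n S (q n)) = 0.
Proof.
move=> mS S1 [lam [q [QQq _ _ ->]]]; exists q => //.
rewrite eseries0 // => n _ _; rewrite (_ : q n _ = 0) ?mule0 //.
have mSq := mS _ (QQq n).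
apply: (@subset_measure0 _ _ _ _ _ (~` S (q n))).
- by apply: measurableC; apply: bigcupT_measurable => k; exact: mS.
- exact: measurableC.
- by apply: subsetC => x Sx; exists n.
- by have := probability_setC (q n) mSq; rewrite S1 // subee.
Qed.

Theorem lemma4p4 (d : measure_display) (T : measurableType d) (R : realType)
  (PP QQ : set (probability T R)) (S : probability T R -> set T)
  (hloc : pre_hahn_localizable PP QQ S)
  (hdisj : forall Q Q', QQ Q -> QQ Q' -> Q <> Q' -> S Q `&` S Q' = set0)
  (mu : {charge set T -> \bar R}%R) (hmu : in_ca PP mu)
  (P : probability T R) (hP : PP P) :
  abs_cont mu (P : set T -> \bar R) <->
  @abs_cont _ (HT QQ S) R (hext QQ S mu) (hext QQ S P).
Proof.
have [mS S1 _ _ PP_sconv] := hloc.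
have hextE := hext_sub_support _ _ mS hdisj.
have mAS := measurable_HT_setI_support _ _ mS hdisj.
split => [/measure_abs_contP muP|hextP].
  apply/abs_contP => [A _|A B|A mA PA0]; [exact: hext_ge0 | exact: le_hext |].
  rewrite /hext ssum0 // => Q [QQQ _].
  by apply: muP; [exact: mAS | exact: hext_eq0_setI].
apply/measure_abs_contP => A mA PA0.
have [P' PP' muP'] := hmu.
have [m Pm P'm] := PP_sconv _ (ex_intro2 _ _ P' PP' erefl).
have [q QQq mU0] :=
  sconv_null_outside_supports mS (fun Q QQQ => S1 Q Q QQQ QQQ erefl) Pm.
have mU : measurable (\bigcup_n S (q n)).
  by apply: bigcupT_measurable => n; exact: mS.
apply: (@charge_eq0_cover _ _ _ _ _ (S \o q) mA) => [n|| n D mD DADSq].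
- exact: mS.
- apply: (abs_cont_eq0 muP'); first exact: measurableD.
  apply: (subset_measure0 _ (measurableC mU)); first exact: measurableD.
    by move=> x [].
  exact: (abs_cont_eq0 P'm (measurableC mU) mU0).
- have [DA DSq] : D `<=` A /\ D `<=` S (q n) by rewrite -subsetI.
  rewrite -(hextE _ _ _ (charge0 mu) (QQq n) mD DSq).
  apply: (abs_cont_eq0 hextP); first exact: measurable_HT.
  rewrite (hextE _ _ _ (measure0 P) (QQq n) mD DSq).
  exact: subset_measure0 PA0.
Qed.
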